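(* Let $d\le p$ be positive integers, let $\mathcal{U}\subset\mathbb{R}^p$ be a nonempty closed convex cone, let $G$ be a real $d\times p$ matrix with $\{Gu:u\in\mathcal{U}\}=\mathbb{R}^d$, and let $\kappa\in\mathbb{R}^p$. Let $\mathcal{U}_1=\{u\in\mathcal{U}:|Gu|=1\}$ and $\mathcal{H}(q)=\sup_{u\in\mathcal{U}_1}\{-Gu\cdot q-\kappa\cdot u\}$, $q\in\mathbb{R}^d$. Suppose that (a) $\{u\in\mathcal{U}:Gu=0\text{ and }\kappa\cdot u\le0\}=\{0\}$, and (b) there exists a unit vector $u_1\in\mathbb{R}^p$ such that $\inf_{u\in\mathcal{U}_1}u_1\cdot u>0$. Then $\inf_{q\in\mathbb{R}^d}\mathcal{H}(q)<0$.
   Context: $|\cdot|$ denotes the Euclidean norm. *)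

From HB Require Import structures.
From mathcomp Require Import all_boot all_order all_algebra.
From mathcomp Require Import all_classical all_reals all_analysis.
Import numFieldNormedType.Exports.
Set Implicit Arguments. Unset Strict Implicit. Unset Printing Implicit Defensive.
Import Order.TTheory GRing.Theory Num.Theory.
Local Open Scope classical_set_scope.
Local Open Scope ring_scope.

Definition dotv (R : realType) (n : nat) (u v : 'cV[R]_n) : R :=
  \sum_(i < n) u i 0 * v i 0.

Definition enorm (R : realType) (n : nat) (u : 'cV[R]_n) : R :=
  Num.sqrt (dotv u u).

Definition is_cone (R : realType) (n : nat) (U : set 'cV[R]_n) : Prop :=
  forall u (l : R), U u -> 0 <= l -> U (l *: u).

Definition is_convex_set (R : realType) (n : nat) (U : set 'cV[R]_n) : Prop :=
  forall u v (t : R), U u -> U v -> 0 <= t <= 1 -> U (t *: u + (1 - t) *: v).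

Definition U1 (R : realType) (d p : nat) (U : set 'cV[R]_p) (G : 'M[R]_(d, p))
  : set 'cV[R]_p := [set u | U u /\ enorm (G *m u) = 1].

Definition Ham (R : realType) (d p : nat) (U : set 'cV[R]_p) (G : 'M[R]_(d, p))
  (kappa : 'cV[R]_p) (q : 'cV[R]_d) : \bar R :=
  ereal_sup [set ((- dotv (G *m u) q) - dotv kappa u)%:E | u in U1 U G].

From HB Require Import structures.
From mathcomp Require Import all_boot all_order all_algebra.
From mathcomp Require Import all_classical all_reals all_analysis.
From mathcomp Require Import ring lra.
Import numFieldNormedType.Exports.
Import Order.TTheory GRing.Theory Num.Theory.
Local Open Scope classical_set_scope.
Local Open Scope ring_scope.

(* By (a) and compactness of the unit sphere of U there are delta > 0 and
   N >= 0 with  delta u1.u <= kappa.u + N |Gu|_1  on U.  The penalty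
   N |Gu|_1 is then traded, one coordinate of Gu at a time, for a linear
   term Gu.q: on a convex cone, if k - N |g| <= f with f, g linear and k
   superlinear, then k <= f + q g for any q between the ratios (k - f)/g on
   {g > 0} and on {g < 0}, and such a q exists because combining points of
   the two sides into the kernel of g shows the ratios are ordered.  If
   c > 0 is the infimum in (b), then for u in U_1
   -Gu.q - kappa.u <= -delta u1.u <= -delta c, so H(q) < 0. *)

Lemma exists_separating_real {R : realType} {A B : set R} :
  has_ubound A -> has_lbound B -> (forall a b, A a -> B b -> a <= b) ->
  exists q, ubound A q /\ lbound B q.
Proof.
move=> [M AM] [m Bm] AB.
have [->|/set0P A0] := eqVneq A set0; first by exists m; split.
exists (sup A); split; first by apply: sup_upper_bound; split => //; exists M.
by move=> b Bb; apply: ge_sup => // a Aa; exact: AB.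
Qed.

Section ConePenalty.
Context {R : realType} {V : lmodType R}.
Implicit Types (C : set V) (f g k : V -> R).

Definition linear_form f :=
  forall a b u v, f (a *: u + b *: v) = a * f u + b * f v.

Definition convex_cone C :=
  forall a b u v, C u -> C v -> 0 <= a -> 0 <= b -> C (a *: u + b *: v).

Definition superlinear_on C k := forall a b u v, C u -> C v -> 0 <= a -> 0 <= b ->
  a * k u + b * k v <= k (a *: u + b *: v).

Definition pos_homogeneous f := forall c u, 0 <= c -> f (c *: u) = c * f u.

Lemma linear_form_pos_homogeneous {f} : linear_form f -> pos_homogeneous f.
Proof. by move=> lf c u _; have := lf c 0 u u; rewrite scale0r addr0 mul0r addr0. Qed.

Lemma linear_form_superlinear {C f} : linear_form f -> superlinear_on C f.
Proof. by move=> lf a b u v *; rewrite lf. Qed.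

Lemma penalty_multiplier {C f g k} {N : R} :
  convex_cone C -> linear_form f -> linear_form g -> superlinear_on C k -> 0 <= N ->
  (forall u, C u -> k u - N * `|g u| <= f u) ->
  exists q, forall u, C u -> k u <= f u + q * g u.
Proof.
move=> cC lf lg sk N0 pen.
pose r u := (k u - f u) / g u.
pose Pos := [set u | C u /\ 0 < g u]; pose Neg := [set u | C u /\ g u < 0].
have Pos_ub : has_ubound (r @` Pos).
  exists N => _ [u [Cu gu] <-]; rewrite /r ler_pdivrMr //.
  by have := pen u Cu; rewrite gtr0_norm //; lra.
have Neg_lb : has_lbound (r @` Neg).
  exists (- N) => _ [u [Cu gu] <-]; rewrite /r ler_ndivlMr //.
  by have := pen u Cu; rewrite ltr0_norm //; lra.
have r_ordered a b : (r @` Pos) a -> (r @` Neg) b -> a <= b.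
  move=> [v [Cv gv] <-] [u [Cu gu] <-].
  (* [w] lies in the kernel of [g], where the penalty vanishes *)
  pose w := (- g u) *: v + g v *: u.
  have Cw : C w by apply: cC => //; lra.
  have gw : g w = 0 by rewrite /w lg; ring.
  have := pen w Cw; rewrite gw normr0 mulr0 subr0 /w lf => fw.
  have := sk (- g u) (g v) v u Cv Cu ltac:(lra) ltac:(lra).
  rewrite /r ler_pdivrMr // mulrAC ler_ndivlMr //; nra.
have [q [Pos_q Neg_q]] := exists_separating_real Pos_ub Neg_lb r_ordered.
exists q => u Cu; have [gu|gu|gu0] := ltgtP (g u) 0.
- by have := Neg_q _ (imageP r (conj Cu gu)); rewrite ler_ndivlMr //; lra.
- by have := Pos_q _ (imageP r (conj Cu gu)); rewrite ler_pdivrMr //; lra.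
- by have := pen u Cu; rewrite gu0 normr0 !mulr0 subr0 addr0.
Qed.

Lemma penalty_multipliers {C} {g : nat -> V -> R} n {f k} {N : R} :
  convex_cone C -> (forall i, linear_form (g i)) -> linear_form f ->
  superlinear_on C k -> 0 <= N ->
  (forall u, C u -> k u - N * \sum_(i < n) `|g i u| <= f u) ->
  exists q : nat -> R, forall u, C u -> k u <= f u + \sum_(i < n) q i * g i u.
Proof.
elim: n f k N => [|n IH] f k N cC lg lf sk N0 pen.
  by exists (fun=> 0) => u Cu; have := pen u Cu; rewrite !big_ord0; lra.
pose k' u := k u - N * \sum_(i < n) `|g i u|.
have sk' : superlinear_on C k'.
  move=> a b u v Cu Cv a0 b0; have := sk a b u v Cu Cv a0 b0.
  have : \sum_(i < n) `|g i (a *: u + b *: v)| <=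
      a * \sum_(i < n) `|g i u| + b * \sum_(i < n) `|g i v|.
    rewrite !mulr_sumr -big_split /=; apply: ler_sum => i _.
    rewrite lg; apply: (le_trans (ler_normD _ _)).
    by rewrite !normrM (ger0_norm a0) (ger0_norm b0).
  rewrite /k'; nra.
have [qn Hqn] : exists qn, forall u, C u -> k' u <= f u + qn * g n u.
  apply: (penalty_multiplier cC lf (lg n) sk' N0) => u Cu.
  by have := pen u Cu; rewrite big_ord_recr /= /k'; lra.
pose f' u := f u + qn * g n u.
have lf' : linear_form f' by move=> a b u v; rewrite /f' lf lg; ring.
have [q Hq] := IH f' k N cC lg lf' sk N0 Hqn.
exists (fun j => if j == n then qn else q j) => u Cu.
rewrite big_ord_recr /= eqxx.
under eq_bigr => i _ do rewrite ltn_eqF //.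
by have := Hq u Cu; rewrite /f'; lra.
Qed.

End ConePenalty.

Section CompactBounds.
Context {R : realType} {T : topologicalType}.

Lemma compact_pos_lbound {A : set T} {f : T -> R} :
  compact A -> {within A, continuous f} -> (forall x, A x -> 0 < f x) ->
  exists2 m, 0 < m & forall x, A x -> m <= f x.
Proof.
move=> cA cf f_gt0; have [->|/set0P A0] := eqVneq A set0; first by exists 1.
have [c /set_mem Ac cmin] := compact_EVT_min A0 cA cf.
by exists (f c) => [|x Ax]; [exact: f_gt0 | exact/cmin/mem_set].
Qed.

Lemma compact_normr_bound {A : set T} {f : T -> R} :
  compact A -> {within A, continuous f} ->
  exists2 M, 0 < M & forall x, A x -> `|f x| <= M.
Proof.
move=> cA cf; have [M [_ fAM]] := compact_bounded (continuous_compact cf cA).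
exists (`|M| + 1) => [|x Ax]; first by rewrite ltr_pwDr.
by apply: (fAM (`|M| + 1)); [rewrite ltr_pwDr // ler_norm | exists x].
Qed.

End CompactBounds.

Section NormedCone.
Context {R : realType} {V : normedModType R}.
Implicit Types (U : set V) (f h : V -> R).

Lemma cone_sphere_nonpos {U f} : (forall u c, U u -> 0 <= c -> U (c *: u)) ->
  pos_homogeneous f -> (forall x, U x -> `|x| = 1 -> f x <= 0) ->
  forall u, U u -> f u <= 0.
Proof.
move=> coneU hf f_sph u Uu; have [->|u0] := eqVneq u 0.
  by rewrite -(scale0r (0 : V)) hf // mul0r.
have nu : 0 < `|u| by rewrite normr_gt0.
have x1 : `| `|u|^-1 *: u | = 1 by rewrite normrZ gtr0_norm ?invr_gt0 // mulVf ?gt_eqF.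
rewrite -(scalerKV (lt0r_neq0 nu) u) hf // pmulr_rle0 //.
by apply: f_sph x1; apply: coneU; rewrite // invr_ge0 normr_ge0.
Qed.

Lemma cone_penalty_bound {U h kf lf} :
  (forall u c, U u -> 0 <= c -> U (c *: u)) -> compact [set x | U x /\ `|x| = 1] ->
  continuous h -> continuous kf -> continuous lf ->
  pos_homogeneous h -> pos_homogeneous kf -> pos_homogeneous lf -> (forall u, 0 <= h u) ->
  (forall u, U u -> h u = 0 -> kf u <= 0 -> u = 0) ->
  exists2 delta, 0 < delta & exists2 N, 0 <= N &
    forall u, U u -> delta * lf u - N * h u <= kf u.
Proof.
move=> coneU cS ch ck cl hh hk hl h_ge0 ker.
set S := [set x | U x /\ `|x| = 1] in cS.
have [m m_gt0 m_le] : exists2 m, 0 < m & forall x, S x -> m <= Num.max (h x) (kf x).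
  apply: compact_pos_lbound cS _ _.
    by apply: continuous_subspaceT => x; apply: continuous_max; [exact: ch | exact: ck].
  move=> x [Ux x1]; rewrite lt_max; apply/negPn/negP; rewrite negb_or -!leNgt.
  case/andP=> hx kx; have hx0 : h x = 0 by apply/eqP; rewrite eq_le hx h_ge0.
  by move: x1; rewrite (ker x Ux hx0 kx) normr0 => /eqP; rewrite eq_sym oner_eq0.
have [L L_gt0 lL] := compact_normr_bound cS (continuous_subspaceT cl).
have [K K_gt0 kK] := compact_normr_bound cS (continuous_subspaceT ck).
exists (m / L); first exact: divr_gt0.
have N_gt0 : 0 < (K + m) / m by rewrite divr_gt0 // addr_gt0.
exists ((K + m) / m); first exact: ltW.
pose phi u := m / L * lf u - (K + m) / m * h u - kf u.
suff phi_le0 : forall u, U u -> phi u <= 0.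
  by move=> u /phi_le0; rewrite subr_le0.
apply: (cone_sphere_nonpos coneU) => [c u c0 | x Ux x1].
  by rewrite /phi hh // hk // hl //; ring.
rewrite subr_le0.
have /ler_normlP[_ lx] := lL x (conj Ux x1).
have /ler_normlP[kx _] := kK x (conj Ux x1).
have lx_le : m / L * lf x <= m by rewrite mulrAC ler_pdivrMr // ler_pM2l //.
have hx_ge : 0 <= (K + m) / m * h x by rewrite mulr_ge0 // ltW.
have := m_le x (conj Ux x1); rewrite le_max => /orP[hx|]; last lra.
suff : K + m <= (K + m) / m * h x by lra.
by rewrite mulrAC ler_pdivlMr // ler_pM2l // ltr_wpDl ?ltW.
Qed.

End NormedCone.

Section ColumnVectors.
Context {R : realType}.

Lemma mx_norm_coord {m n} (M : 'M[R]_(m, n)) i j : `|M i j| <= `|M|.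
Proof.
rewrite [leRHS]/Num.Def.normr /= mx_normrE.
by apply/bigmax_geP; right; exists (i, j).
Qed.

Lemma mx_norm_le {m n} (M : 'M[R]_(m, n)) c :
  0 <= c -> (forall i j, `|M i j| <= c) -> `|M| <= c.
Proof.
move=> c0 Mc; rewrite [leLHS]/Num.Def.normr /= mx_normrE.
by apply/bigmax_leP; split => // -[i j] _; exact: Mc.
Qed.

Lemma mx_norm_trmx {m n} (M : 'M[R]_(m, n)) : `|M^T| = `|M|.
Proof.
apply/le_anti/andP; split; apply: mx_norm_le => // i j.
  by rewrite mxE; exact: mx_norm_coord.
by rewrite -[M]trmxK mxE trmxK; exact: mx_norm_coord.
Qed.

Lemma trmx_continuous {m n} : continuous (@trmx R m n).
Proof.
move=> M A /nbhs_ballP[e e_gt0 eA]; apply/nbhs_ballP; exists e => // N [_ MN].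
by apply: eA; split => // i j; rewrite !mxE; exact: MN.
Qed.

Lemma closed_sphere_compact {p} {U : set 'cV[R]_p} :
  closed U -> compact [set x | U x /\ `|x| = 1].
Proof.
move=> cU; pose S := [set r : 'rV[R]_p | U r^T /\ `|r| = 1].
have -> : [set x | U x /\ `|x| = 1] = trmx @` S.
  apply/seteqP; split => [x [Ux x1]|_ [r [Ur r1] <-]].
    by exists x^T; rewrite /S /= trmxK ?mx_norm_trmx.
  by split => //; rewrite mx_norm_trmx.
apply: continuous_compact; first exact/continuous_subspaceT/trmx_continuous.
apply: bounded_closed_compact.
  rewrite /= /bounded_near; near=> M => r [_ /= ->].
  by near: M; exact: nbhs_pinfty_ge.
have -> : S = trmx @^-1` U `&` (fun r : 'rV[R]_p => `|r|) @^-1` [set 1] by [].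
apply: closedI; apply: preimage_closed => // r _.
  exact: trmx_continuous.
exact: norm_continuous.
Unshelve. all: by end_near.
Qed.

Lemma dotv_linear {n} (a : 'cV[R]_n) : linear_form (dotv a).
Proof.
move=> x y u v; rewrite /dotv !mulr_sumr -big_split /=.
by apply: eq_bigr => i _; rewrite !mxE; ring.
Qed.

Lemma dotvZl {n} (a u : 'cV[R]_n) c : dotv (c *: a) u = c * dotv a u.
Proof. by rewrite /dotv mulr_sumr; apply: eq_bigr => i _; rewrite mxE mulrA. Qed.

Lemma dotv_continuous {n} (a : 'cV[R]_n) : continuous (dotv a).
Proof.
apply: continuous_big => //; first exact: add_continuous.
by move=> j _ u; apply: continuousM; [exact: cst_continuous | exact: coord_continuous].
Qed.

Lemma mulmx_dotv {d p} (G : 'M[R]_(d, p)) u i : (G *m u) i 0 = dotv (row i G)^T u.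
Proof. by rewrite mxE; apply: eq_bigr => j _; rewrite !mxE. Qed.

Definition l1norm {n} (v : 'cV[R]_n) := \sum_(i < n) `|v i 0|.

Lemma l1norm_ge0 {n} (v : 'cV[R]_n) : 0 <= l1norm v.
Proof. exact: sumr_ge0. Qed.

Lemma l1norm_eq0 {n} (v : 'cV[R]_n) : l1norm v = 0 -> v = 0.
Proof.
move=> v0; apply/matrixP => i j; rewrite ord1 [RHS]mxE; apply/normr0_eq0.
exact: (psumr_eq0P (fun i _ => normr_ge0 (v i 0)) v0).
Qed.

Lemma l1norm_mulmx_homogeneous {d p} (G : 'M[R]_(d, p)) :
  pos_homogeneous (fun u => l1norm (G *m u)).
Proof.
move=> c u c0; rewrite /l1norm mulr_sumr; apply: eq_bigr => i _.
by rewrite -scalemxAr mxE normrM ger0_norm.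
Qed.

Lemma l1norm_mulmx_continuous {d p} (G : 'M[R]_(d, p)) :
  continuous (fun u => l1norm (G *m u)).
Proof.
apply: continuous_big => //; first exact: add_continuous.
move=> i _ u; under eq_fun do rewrite mulmx_dotv.
by apply: continuous_comp; [exact: dotv_continuous | exact: norm_continuous].
Qed.

Lemma penalty_multipliers_mx {d p} {C : set 'cV[R]_p} {G : 'M[R]_(d, p)} {f k} {N : R} :
  convex_cone C -> linear_form f -> superlinear_on C k -> 0 <= N ->
  (forall u, C u -> k u - N * l1norm (G *m u) <= f u) ->
  exists q : 'cV[R]_d, forall u, C u -> k u <= f u + dotv (G *m u) q.
Proof.
move=> cC lf sk N0 pen.
pose g (i : nat) (u : 'cV[R]_p) := if insub i is Some j then (G *m u) j 0 else 0.
have gE (i : 'I_d) (u : 'cV[R]_p) : g i u = (G *m u) i 0 by rewrite /g valK.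
have lg i : linear_form (g i).
  move=> a b u v; rewrite /g; case: insub => [j|]; last by ring.
  by rewrite mulmxDr -!scalemxAr !mxE.
have [|q Hq] := penalty_multipliers d cC lg lf sk N0.
  by move=> u Cu; under eq_bigr do rewrite gE; exact: pen.
exists (\col_i q i) => u Cu; rewrite /dotv.
under eq_bigr do rewrite mxE mulrC -gE.
exact: Hq.
Qed.

End ColumnVectors.

Lemma is_cone_convex_cone {R : realType} {p} {U : set 'cV[R]_p} :
  is_cone U -> is_convex_set U -> convex_cone U.
Proof.
move=> coneU convU a b u v Uu Uv a0 b0.
have [ab0|ab_neq0] := eqVneq (a + b) 0.
  have [-> ->] : a = 0 /\ b = 0 by split; lra.
  by rewrite !scale0r addr0 -(scale0r u); exact: coneU.
have ab_gt0 : 0 < a + b by rewrite lt_def ab_neq0 addr_ge0.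
pose t := a / (a + b).
have -> : a *: u + b *: v = (a + b) *: (t *: u + (1 - t) *: v).
  by rewrite scalerDr !scalerA; congr (_ *: _ + _ *: _); rewrite /t; field.
apply: coneU (ltW ab_gt0); apply: convU => //; rewrite /t.
by rewrite divr_ge0 ?addr_ge0 //= ler_pdivrMr // mul1r lerDl.
Qed.

Lemma ereal_inf_gt0_lbound {R : realType} {T} {A : set T} {f : T -> R} :
  (0 < ereal_inf [set (f x)%:E | x in A])%E -> exists2 c, 0 < c & forall x, A x -> c <= f x.
Proof.
have lb x : A x -> (ereal_inf [set (f x)%:E | x in A] <= (f x)%:E)%E.
  by move=> Ax; apply: ereal_inf_lbound; exists x.
case E: ereal_inf lb => [r| |] // lb; rewrite ?lte_fin => r_gt0.
  by exists r => // x /lb; rewrite lee_fin.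
by exists 1 => // x /lb.
Qed.

Theorem theorem2p2 (R : realType) (d p : nat) (U : set 'cV[R]_p)
  (G : 'M[R]_(d, p)) (kappa : 'cV[R]_p) :
  (0 < d)%N -> (d <= p)%N ->
  U !=set0 -> closed U -> is_convex_set U -> is_cone U ->
  [set G *m u | u in U] = [set: 'cV[R]_d] ->
  [set u | U u /\ G *m u = 0 /\ dotv kappa u <= 0] = [set 0] ->
  (exists u1 : 'cV[R]_p, enorm u1 = 1 /\
      (0 < ereal_inf [set (dotv u1 u)%:E | u in U1 U G])%E) ->
  (ereal_inf [set Ham U G kappa q | q in [set: 'cV[R]_d]] < 0)%E.
Proof.
move=> _ _ _ cU convU coneU _ ker [u1 [_ /ereal_inf_gt0_lbound[c c_gt0 u1_ge]]].
have kerU u : U u -> l1norm (G *m u) = 0 -> dotv kappa u <= 0 -> u = 0.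
  by move=> Uu /l1norm_eq0 Gu ku; have : [set 0] u by rewrite -ker.
have [delta delta_gt0 [N N_ge0 bound]] :=
  cone_penalty_bound coneU (closed_sphere_compact cU)
    (l1norm_mulmx_continuous G) (dotv_continuous kappa) (dotv_continuous u1)
    (l1norm_mulmx_homogeneous G) (linear_form_pos_homogeneous (dotv_linear kappa))
    (linear_form_pos_homogeneous (dotv_linear u1)) (fun u => l1norm_ge0 _) kerU.
have bound' u : U u -> dotv (delta *: u1) u - N * l1norm (G *m u) <= dotv kappa u.
  by move=> Uu; rewrite dotvZl; exact: bound.
have [q Hq] := penalty_multipliers_mx (is_cone_convex_cone coneU convU)
  (dotv_linear kappa) (linear_form_superlinear (dotv_linear (delta *: u1))) N_ge0 bound'.
apply: (le_lt_trans (ereal_inf_lbound _)); first by exists q.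
apply: (@le_lt_trans _ _ (- (delta * c))%:E); last by rewrite lte_fin oppr_lt0 mulr_gt0.
apply: ge_ereal_sup => _ [u [Uu Gu1] <-]; rewrite lee_fin.
have := Hq u Uu; rewrite dotvZl.
have : delta * c <= delta * dotv u1 u by rewrite ler_pM2l // u1_ge.
lra.
Qed.
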